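(* Assume $\Delta=0$. Let $\mathcal{O}'(K)$ be the subring of $K$ generated (as a ring with $1$) by $\alpha,\beta,\gamma,\alpha l,\beta m$. Then $N$, viewed as an additive subgroup of $K^2$, is an $\mathcal{O}'(K)$-module: for every $\zeta\in N$ and every $x\in\mathcal{O}'(K)$ one has $x\zeta\in N$ (scalar multiplication in $K^2$). In particular $N$ is stable under multiplication by $\theta:=-4+\alpha+\beta+\gamma+\alpha l$.
   Context: Setting. Let $p,q,r\ge 3$ be integers and $W=W(p,q,r)$ the Coxeter group with generators $s_1,s_2,s_3$ and relations $s_i^2=1$, $(s_1s_2)^p=(s_1s_3)^q=(s_2s_3)^r=1$. Let $\alpha=4\cos^2(\pi k_1/p)$, $\beta=4\cos^2(\pi k_2/q)$, $\gamma=4\cos^2(\pi k_3/r)$ with $\gcd(k_1,p)=\gcd(k_2,q)=\gcd(k_3,r)=1$ (so $0<\alpha,\beta,\gamma<4$), and let $l,m\in\mathbb{C}$ with $lm=\gamma$. Let $K\subset\mathbb{C}$ be a field containing $\alpha,\beta,\gamma,l,m$, and $M$ a $3$-dimensional $K$-vector space with basis $(a_1,a_2,a_3)$. The reflection representation $R:W\to GL(M)$ with parameters $(\alpha,\beta,\gamma;l,m)$ is defined by: for $x=\lambda_1a_1+\lambda_2a_2+\lambda_3a_3$, $R(s_1)x=x-(2\lambda_1-\alpha\lambda_2-\beta\lambda_3)a_1$, $R(s_2)x=x-(-\lambda_1+2\lambda_2-l\lambda_3)a_2$, $R(s_3)x=x-(-\lambda_1-m\lambda_2+2\lambda_3)a_3$.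 Put $G=R(W)$ and write $s_i$ for $R(s_i)$. Let $\Delta=8-2\alpha-2\beta-2\gamma-(\alpha l+\beta m)$; $R$ is reducible iff $\Delta=0$. Reducible setting. Assume $\Delta=0$. Put $b=(4-\gamma)a_1+(l+2)a_2+(m+2)a_3$; then the space of $G$-fixed vectors is $C_M(G)=Kb$ and $(b,a_2,a_3)$ is a basis of $M$. Let $N=N(G)$ be the subgroup of elements of $G$ acting trivially on $M/C_M(G)$. Each $\zeta\in N$ satisfies $\zeta(b)=b$, $\zeta(a_2)=a_2+\lambda b$, $\zeta(a_3)=a_3+\mu b$ for a unique $(\lambda,\mu)\in K^2$; the map $\zeta\mapsto(\lambda,\mu)$ is an injective group homomorphism $N\to (K^2,+)$, through which $N$ is identified with an additive subgroup of $K^2$ (and written additively). Put $c_1=(\alpha,\beta)$, $c_2=(-2,l)$, $c_3=(m,-2)\in K^2$ and, for $\zeta=(\lambda,\mu)\in K^2$, $\omega(\zeta)=-\frac{\lambda(l+2)+\mu(m+2)}{4-\gamma}$. *)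

From HB Require Import structures.
From mathcomp Require Import all_boot all_order all_algebra all_field.
Set Implicit Arguments. Unset Strict Implicit. Unset Printing Implicit Defensive.
Import Order.TTheory GRing.Theory Num.Theory.
Local Open Scope ring_scope.

(* Indices of the basis (a_1,a_2,a_3) of M = K^3 (coordinates as columns). *)
Definition i1 : 'I_3 := @Ordinal 3 0 isT.
Definition i2 : 'I_3 := @Ordinal 3 1 isT.
Definition i3 : 'I_3 := @Ordinal 3 2 isT.

Definition avec (K : fieldType) (i : 'I_3) : 'cV[K]_3 := delta_mx i 0.

Definition row3 (K : fieldType) (x y z : K) : 'rV[K]_3 := \row_j [:: x; y; z]`_j.
Definition col3 (K : fieldType) (x y z : K) : 'cV[K]_3 := \col_i [:: x; y; z]`_i.

Definition reflmx (K : fieldType) (k : 'I_3) (c : 'rV[K]_3) : 'M[K]_3 :=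
  1%:M - avec K k *m c.

Definition Rs1 (K : fieldType) (alpha beta : K) : 'M[K]_3 :=
  reflmx i1 (row3 2 (- alpha) (- beta)).
Definition Rs2 (K : fieldType) (l : K) : 'M[K]_3 :=
  reflmx i2 (row3 (-1) 2 (- l)).
Definition Rs3 (K : fieldType) (m : K) : 'M[K]_3 :=
  reflmx i3 (row3 (-1) (- m) 2).

(* G = R(W): the group generated by R(s_1),R(s_2),R(s_3) in GL(M).
   Since each R(s_i) is an involution, it is the monoid they generate. *)
Inductive inG (K : fieldType) (alpha beta l m : K) : 'M[K]_3 -> Prop :=
  | inG1 : inG alpha beta l m 1%:M
  | inG_s1 g : inG alpha beta l m g -> inG alpha beta l m (g *m Rs1 alpha beta)
  | inG_s2 g : inG alpha beta l m g -> inG alpha beta l m (g *m Rs2 l)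
  | inG_s3 g : inG alpha beta l m g -> inG alpha beta l m (g *m Rs3 m).

Definition fixedG (K : fieldType) (alpha beta l m : K) (v : 'cV[K]_3) : Prop :=
  forall g, inG alpha beta l m g -> g *m v = v.

(* N(G): elements of G acting trivially on M / C_M(G) *)
Definition inN (K : fieldType) (alpha beta l m : K) (g : 'M[K]_3) : Prop :=
  inG alpha beta l m g /\
  forall v : 'cV[K]_3, fixedG alpha beta l m (g *m v - v).

Definition bvec (K : fieldType) (gamma l m : K) : 'cV[K]_3 :=
  col3 (4 - gamma) (l + 2) (m + 2).

Definition Ncoord (K : fieldType) (gamma l m : K) (g : 'M[K]_3) (lam mu : K) : Prop :=
  g *m avec K i2 = avec K i2 + lam *: bvec gamma l m /\
  g *m avec K i3 = avec K i3 + mu *: bvec gamma l m.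

Definition N2 (K : fieldType) (alpha beta gamma l m : K) (z : K * K) : Prop :=
  exists g, inN alpha beta l m g /\ Ncoord gamma l m g z.1 z.2.

Inductive inO' (K : fieldType) (alpha beta gamma l m : K) : K -> Prop :=
  | O'1 : inO' alpha beta gamma l m 1
  | O'alpha : inO' alpha beta gamma l m alpha
  | O'beta : inO' alpha beta gamma l m beta
  | O'gamma : inO' alpha beta gamma l m gamma
  | O'al : inO' alpha beta gamma l m (alpha * l)
  | O'bm : inO' alpha beta gamma l m (beta * m)
  | O'add x y : inO' alpha beta gamma l m x -> inO' alpha beta gamma l m y ->
                inO' alpha beta gamma l m (x + y)
  | O'opp x : inO' alpha beta gamma l m x -> inO' alpha beta gamma l m (- x)
  | O'mul x y : inO' alpha beta gamma l m x -> inO' alpha beta gamma l m y ->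
                inO' alpha beta gamma l m (x * y).

Definition Delta (K : fieldType) (alpha beta gamma l m : K) : K :=
  8 - 2 * alpha - 2 * beta - 2 * gamma - (alpha * l + beta * m).

From HB Require Import structures.
From mathcomp Require Import all_boot all_order all_algebra all_field.
From mathcomp Require Import ring.
Set Implicit Arguments. Unset Strict Implicit. Unset Printing Implicit Defensive.
Import Order.TTheory GRing.Theory Num.Theory.
Local Open Scope ring_scope.

(* Every element of N is a transvection 1 + b t, where t is a row vector with
   t b = 0 and (t a_2, t a_3) are its coordinates in K^2.  The set of such t is
   an additive group, and it is stable under t |-> t g for g in G because
   g^-1 (1 + b t) g = 1 + b (t g).  So N is a module over the image of the group
   ring Z[G] acting on the plane V = {t | t b = 0}, the dual of M / K b.  By
   Cayley-Hamilton on this plane (det s_i = -1 there), s_i s_j + s_j s_i acts as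
   tr(s_i s_j) = alpha - 2, beta - 2, gamma - 2, and s1 s2 s3 - s3 s2 s1 as
   tr(s1 s2 s3) = theta.  Then alpha l = theta + 4 - alpha - beta - gamma and,
   as Delta = 0, beta m = 8 - 2 alpha - 2 beta - 2 gamma - alpha l also act
   through Z[G], hence so does all of O'(K).  That b spans a complement of
   <a_2, a_3> (i.e. gamma <> 4) is what makes N correspond to such t. *)

Ltac mx3_entries :=
  rewrite /Rs1 /Rs2 /Rs3 /reflmx /avec /row3 /col3 /bvec /i1 /i2 /i3;
  apply/matrixP => [[[|[|[|?]]] ?] [[|[|[|?]]] ?]] //;
  repeat rewrite !mxE /= ?big_ord_recl ?big_ord0 /=.

Section Transvection.
Variables (K : fieldType) (n : nat) (u : 'cV[K]_n).

Definition transvection (t : 'rV[K]_n) : 'M[K]_n := 1%:M + u *m t.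

Lemma transvection0 : transvection 0 = 1%:M.
Proof. by rewrite /transvection mulmx0 addr0. Qed.

Lemma transvectionD t t' : t *m u = 0 ->
  transvection t *m transvection t' = transvection (t + t').
Proof.
move=> tu0; rewrite /transvection mulmxDr mulmx1 mulmxDl mul1mx mulmxA.
by rewrite -(mulmxA u) tu0 mulmx0 mul0mx addr0 mulmxDr addrA.
Qed.

Lemma transvection_conj g h t : h *m g = 1%:M -> g *m u = u ->
  h *m transvection t *m g = transvection (t *m g).
Proof.
move=> hg gu; have hu : h *m u = u by rewrite -{1}gu mulmxA hg mul1mx.
by rewrite /transvection mulmxDr mulmx1 mulmxDl hg !mulmxA hu.
Qed.

Lemma transvection_fix t (v : 'cV[K]_n) : t *m v = 0 -> transvection t *m v = v.
Proof. by move=> tv; rewrite /transvection mulmxDl mul1mx -mulmxA tv mulmx0 addr0. Qed.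

Lemma transvection_subr t (v : 'cV[K]_n) : transvection t *m v - v = u *m (t *m v).
Proof. by rewrite /transvection mulmxDl mul1mx addrAC subrr add0r mulmxA. Qed.

Lemma transvection_delta t i :
  transvection t *m delta_mx i 0 = delta_mx i 0 + t 0 i *: u.
Proof.
rewrite /transvection mulmxDl mul1mx -mulmxA -colE; congr (_ + _).
by rewrite [col i t]mx11_scalar mul_mx_scalar mxE.
Qed.

End Transvection.

Section Coordinates3.
Variable K : fieldType.

Lemma scalar_mx11_eq0 (a : K) : (a%:M : 'M[K]_1) = 0 -> a = 0.
Proof. by move/(congr1 (fun A : 'M_1 => A 0 0)); rewrite !mxE mulr1n. Qed.

Lemma row3_eta (t : 'rV[K]_3) : t = row3 (t 0 i1) (t 0 i2) (t 0 i3).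
Proof. by mx3_entries; congr (t _ _); apply: val_inj. Qed.

Lemma row3D x y z x' y' z' :
  row3 x y z + row3 x' y' z' = row3 (x + x') (y + y') (z + z') :> 'rV[K]_3.
Proof. by mx3_entries. Qed.

Lemma row3N x y z : - row3 x y z = row3 (- x) (- y) (- z) :> 'rV[K]_3.
Proof. by mx3_entries. Qed.

Lemma scale_row3 a x y z :
  a *: row3 x y z = row3 (a * x) (a * y) (a * z) :> 'rV[K]_3.
Proof. by mx3_entries. Qed.

Lemma row3_mul_col3 x y z x' y' z' :
  row3 x y z *m col3 x' y' z' = (x * x' + y * y' + z * z')%:M :> 'M[K]_1.
Proof. by mx3_entries; ring. Qed.

Lemma col3E x y z :
  col3 x y z = x *: avec K i1 + y *: avec K i2 + z *: avec K i3.
Proof. by mx3_entries; ring. Qed.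

Lemma ord3P (k : 'I_3) : [\/ k = i1, k = i2 | k = i3].
Proof.
by case: k => [[|[|[|k]]] hk] //; [apply: Or31 | apply: Or32 | apply: Or33]; apply: val_inj.
Qed.

Lemma eq_mx3 (A B : 'M[K]_3) (x y z : K) : x != 0 ->
    A *m col3 x y z = B *m col3 x y z ->
    A *m avec K i2 = B *m avec K i2 -> A *m avec K i3 = B *m avec K i3 ->
  A = B.
Proof.
move=> x0 eAB e2 e3.
have e1 : A *m avec K i1 = B *m avec K i1.
  move: eAB; rewrite col3E !mulmxDr -!scalemxAr e2 e3.
  by move/addIr/addIr/(scalerI x0).
apply/matrixP => i j; have : A *m avec K j = B *m avec K j by case: (ord3P j) => ->.
by rewrite /avec -!colE => /(congr1 (fun M : 'cV_3 => M i 0)); rewrite !mxE.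
Qed.

Lemma reflmx_invol k (c : 'rV[K]_3) :
  c *m avec K k = 2%:M -> reflmx k c *m reflmx k c = 1%:M.
Proof.
move=> ca; rewrite /reflmx mulmxBl mul1mx mulmxBr mulmx1 -mulmxA (mulmxA c) ca.
by rewrite mul_scalar_mx -scalemxAr scaler_nat mulr2n opprB addrK subrK.
Qed.

Lemma reflmx_fix k (c : 'rV[K]_3) (v : 'cV[K]_3) : c *m v = 0 -> reflmx k c *m v = v.
Proof. by move=> cv; rewrite /reflmx mulmxBl mul1mx -mulmxA cv mulmx0 subr0. Qed.

End Coordinates3.

Section ReflectionGroup.
Variables (K : fieldType) (alpha beta l m : K).
Local Notation G := (inG alpha beta l m).

Lemma Rs1_invol : Rs1 alpha beta *m Rs1 alpha beta = 1%:M.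
Proof. by apply: reflmx_invol; mx3_entries; ring. Qed.
Lemma Rs2_invol : Rs2 l *m Rs2 l = 1%:M.
Proof. by apply: reflmx_invol; mx3_entries; ring. Qed.
Lemma Rs3_invol : Rs3 m *m Rs3 m = 1%:M.
Proof. by apply: reflmx_invol; mx3_entries; ring. Qed.

Lemma row3_mulRs1 x y z :
  row3 x y z *m Rs1 alpha beta = row3 (- x) (y + alpha * x) (z + beta * x).
Proof. by mx3_entries; ring. Qed.
Lemma row3_mulRs2 x y z : row3 x y z *m Rs2 l = row3 (x + y) (- y) (z + l * y).
Proof. by mx3_entries; ring. Qed.
Lemma row3_mulRs3 x y z : row3 x y z *m Rs3 m = row3 (x + z) (y + m * z) (- z).
Proof. by mx3_entries; ring. Qed.

Lemma inG_mulmx g h : G g -> G h -> G (g *m h).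
Proof.
move=> Gg; elim=> [|h' _ IH|h' _ IH|h' _ IH]; rewrite ?mulmx1 // mulmxA.
- exact: inG_s1.
- exact: inG_s2.
- exact: inG_s3.
Qed.

Lemma inG_Rs1 : G (Rs1 alpha beta).
Proof. by rewrite -[Rs1 _ _]mul1mx; apply/inG_s1/inG1. Qed.
Lemma inG_Rs2 : G (Rs2 l).
Proof. by rewrite -[Rs2 _]mul1mx; apply/inG_s2/inG1. Qed.
Lemma inG_Rs3 : G (Rs3 m).
Proof. by rewrite -[Rs3 _]mul1mx; apply/inG_s3/inG1. Qed.

Lemma inG_inv g : G g -> exists2 h, G h & h *m g = 1%:M.
Proof.
have invM g' s : G s -> s *m s = 1%:M -> (exists2 h, G h & h *m g' = 1%:M) ->
    exists2 h, G h & h *m (g' *m s) = 1%:M.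
  move=> Gs ss [h Gh hg]; exists (s *m h); first exact: inG_mulmx.
  by rewrite mulmxA -(mulmxA s) hg mulmx1.
elim=> [|g' _|g' _|g' _].
- by exists 1%:M; [exact: inG1 | rewrite mulmx1].
- exact/invM/Rs1_invol/inG_Rs1.
- exact/invM/Rs2_invol/inG_Rs2.
- exact/invM/Rs3_invol/inG_Rs3.
Qed.

Lemma inG_fixed (v : 'cV[K]_3) g :
  Rs1 alpha beta *m v = v -> Rs2 l *m v = v -> Rs3 m *m v = v ->
  G g -> g *m v = v.
Proof.
move=> v1 v2 v3; elim=> [|h _ IH|h _ IH|h _ IH]; rewrite ?mul1mx // -mulmxA.
- by rewrite v1.
- by rewrite v2.
- by rewrite v3.
Qed.

End ReflectionGroup.

Section TransvectionSubgroup.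
Variables (K : fieldType) (alpha beta l m : K).
Hypothesis Delta0 : Delta alpha beta (l * m) l m = 0.
Hypothesis b1_neq0 : 4 - l * m != 0.
Local Notation G := (inG alpha beta l m).
Local Notation b := (bvec (l * m) l m).
Local Notation s1 := (Rs1 alpha beta).
Local Notation s2 := (Rs2 l).
Local Notation s3 := (Rs3 m).

Lemma beta_m_Delta : beta * m = 8 - 2 * alpha - 2 * beta - 2 * (l * m) - alpha * l.
Proof. by apply/eqP; rewrite -subr_eq0 -oppr_eq0 -Delta0 /Delta; apply/eqP; ring. Qed.

Lemma inG_fix_b g : G g -> g *m b = b.
Proof.
apply: inG_fixed; apply: reflmx_fix; rewrite /bvec row3_mul_col3.
- by rewrite -(raddf0 (@scalar_mx K 1)) -Delta0 /Delta; congr _%:M; ring.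
- by rewrite -(raddf0 (@scalar_mx K 1)); congr _%:M; ring.
- by rewrite -(raddf0 (@scalar_mx K 1)); congr _%:M; ring.
Qed.

Definition inNrow (t : 'rV[K]_3) := t *m b = 0 /\ G (transvection b t).

Lemma inNrowD t t' : inNrow t -> inNrow t' -> inNrow (t + t').
Proof.
move=> [tb Gt] [t'b Gt']; split; first by rewrite mulmxDl tb t'b addr0.
by rewrite -transvectionD //; apply: inG_mulmx.
Qed.

Lemma inNrowN t : inNrow t -> inNrow (- t).
Proof.
move=> [tb Gt]; split; first by rewrite mulNmx tb oppr0.
have [h Gh ht] := inG_inv Gt.
suff -> : transvection b (- t) = h by [].
by rewrite -[LHS]mul1mx -ht -mulmxA transvectionD // subrr transvection0 mulmx1.
Qed.

Lemma inNrow_mulmx t g : G g -> inNrow t -> inNrow (t *m g).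
Proof.
move=> Gg [tb Gt]; split; first by rewrite -mulmxA inG_fix_b.
have [h Gh hg] := inG_inv Gg.
rewrite -(transvection_conj t hg (inG_fix_b Gg)).
by apply/inG_mulmx/Gg/inG_mulmx.
Qed.

Lemma inNrow_N2 t : inNrow t -> N2 alpha beta (l * m) l m (t 0 i2, t 0 i3).
Proof.
move=> [tb Gt]; exists (transvection b t); split; last by rewrite /Ncoord !transvection_delta.
by split=> // v g Gg; rewrite transvection_subr mulmxA inG_fix_b.
Qed.

Lemma N2_inNrow z : N2 alpha beta (l * m) l m z ->
  exists2 t, inNrow t & z = (t 0 i2, t 0 i3).
Proof.
move=> [g [[Gg _] [g2 g3]]].
pose t := row3 (- ((l + 2) * z.1 + (m + 2) * z.2) / (4 - l * m)) z.1 z.2.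
have tb : t *m b = 0.
  by rewrite /bvec row3_mul_col3 -(raddf0 (@scalar_mx K 1)); congr _%:M; field.
have t2 : t 0 i2 = z.1 by rewrite !mxE.
have t3 : t 0 i3 = z.2 by rewrite !mxE.
have gt : g = transvection b t.
  apply: (eq_mx3 (y := l + 2) (z := m + 2) b1_neq0).
  - by rewrite [g *m _](inG_fix_b Gg) transvection_fix.
  - by rewrite g2 transvection_delta t2.
  - by rewrite g3 transvection_delta t3.
by exists t; [split; rewrite -?gt | rewrite t2 t3; case: (z)].
Qed.

Definition kerb_row (y z : K) : 'rV[K]_3 :=
  row3 (- ((l + 2) * y + (m + 2) * z)) ((4 - l * m) * y) ((4 - l * m) * z).

Lemma kerb_rowE t : t *m b = 0 -> (4 - l * m) *: t = kerb_row (t 0 i2) (t 0 i3).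
Proof.
rewrite {1 2}[t]row3_eta /bvec row3_mul_col3 scale_row3 => /scalar_mx11_eq0 tb.
by congr row3; rewrite -[LHS]subr0 -tb; ring.
Qed.

Lemma kerb_eigen P x : (forall y z, kerb_row y z *m P = x *: kerb_row y z) ->
  forall t : 'rV[K]_3, t *m b = 0 -> t *m P = x *: t.
Proof.
move=> eigP t tb; apply: (scalerI b1_neq0).
by rewrite scalemxAl kerb_rowE // eigP -kerb_rowE // scalerA mulrC -scalerA.
Qed.

Lemma kerb_row_s1s2 y z :
  kerb_row y z *m (s1 *m s2 + s2 *m s1) = (alpha - 2) *: kerb_row y z.
Proof.
rewrite mulmxDr !mulmxA !(row3_mulRs1, row3_mulRs2) row3D scale_row3.
have hbm := beta_m_Delta; congr row3; ring: hbm.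
Qed.

Lemma kerb_row_s1s3 y z :
  kerb_row y z *m (s1 *m s3 + s3 *m s1) = (beta - 2) *: kerb_row y z.
Proof.
rewrite mulmxDr !mulmxA !(row3_mulRs1, row3_mulRs3) row3D scale_row3.
have hbm := beta_m_Delta; congr row3; ring: hbm.
Qed.

Lemma kerb_row_s2s3 y z :
  kerb_row y z *m (s2 *m s3 + s3 *m s2) = (l * m - 2) *: kerb_row y z.
Proof.
rewrite mulmxDr !mulmxA !(row3_mulRs2, row3_mulRs3) row3D scale_row3.
have hbm := beta_m_Delta; congr row3; ring: hbm.
Qed.

Lemma kerb_row_s1s2s3 y z :
  kerb_row y z *m (s1 *m s2 *m s3 - s3 *m s2 *m s1) =
  (-4 + alpha + beta + l * m + alpha * l) *: kerb_row y z.
Proof.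
rewrite mulmxBr !mulmxA !(row3_mulRs1, row3_mulRs2, row3_mulRs3).
rewrite row3N row3D scale_row3.
have hbm := beta_m_Delta; congr row3; ring: hbm.
Qed.

Definition Nstable (P : 'M[K]_3) := forall t, inNrow t -> inNrow (t *m P).
Definition Nscalar (x : K) := forall t, inNrow t -> inNrow (x *: t).

Lemma Nstable_G g : G g -> Nstable g.
Proof. by move=> Gg t; apply: inNrow_mulmx. Qed.

Lemma NstableD P Q : Nstable P -> Nstable Q -> Nstable (P + Q).
Proof. by move=> sP sQ t Nt; rewrite mulmxDr; apply: inNrowD; [apply: sP | apply: sQ]. Qed.

Lemma NstableB P Q : Nstable P -> Nstable Q -> Nstable (P - Q).
Proof.
by move=> sP sQ t Nt; rewrite mulmxBr; apply: inNrowD; [apply: sP | apply/inNrowN/sQ].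
Qed.

Lemma Nscalar_eigen P x : Nstable P ->
  (forall y z, kerb_row y z *m P = x *: kerb_row y z) -> Nscalar x.
Proof. by move=> sP eigP t [tb Gt]; rewrite -(kerb_eigen eigP tb); apply: sP. Qed.

Lemma Nscalar1 : Nscalar 1.
Proof. by move=> t; rewrite scale1r. Qed.

Lemma NscalarD x y : Nscalar x -> Nscalar y -> Nscalar (x + y).
Proof. by move=> sx sy t Nt; rewrite scalerDl; apply: inNrowD; [apply: sx | apply: sy]. Qed.

Lemma NscalarN x : Nscalar x -> Nscalar (- x).
Proof. by move=> sx t Nt; rewrite scaleNr; apply/inNrowN/sx. Qed.

Lemma NscalarM x y : Nscalar x -> Nscalar y -> Nscalar (x * y).
Proof. by move=> sx sy t Nt; rewrite -scalerA; apply/sx/sy. Qed.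

Lemma Nscalar_nat k : Nscalar k%:R.
Proof.
elim: k => [|k IH]; last by rewrite mulrS; apply/NscalarD/IH/Nscalar1.
by rewrite mulr0n -(subrr 1); apply/NscalarD/NscalarN/Nscalar1/Nscalar1.
Qed.

Lemma Nscalar_trace2 g h c : G g -> G h ->
    (forall y z, kerb_row y z *m (g *m h + h *m g) = (c - 2) *: kerb_row y z) ->
  Nscalar c.
Proof.
move=> Gg Gh eig; rewrite -(subrK 2 c); apply/NscalarD/Nscalar_nat.
by apply: Nscalar_eigen eig; apply: NstableD; apply: Nstable_G; exact: inG_mulmx.
Qed.

Lemma Nscalar_alpha : Nscalar alpha.
Proof. exact: Nscalar_trace2 (inG_Rs1 alpha beta l m) (inG_Rs2 alpha beta l m) kerb_row_s1s2. Qed.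

Lemma Nscalar_beta : Nscalar beta.
Proof. exact: Nscalar_trace2 (inG_Rs1 alpha beta l m) (inG_Rs3 alpha beta l m) kerb_row_s1s3. Qed.

Lemma Nscalar_gamma : Nscalar (l * m).
Proof. exact: Nscalar_trace2 (inG_Rs2 alpha beta l m) (inG_Rs3 alpha beta l m) kerb_row_s2s3. Qed.

Lemma Nscalar_theta : Nscalar (-4 + alpha + beta + l * m + alpha * l).
Proof.
apply: Nscalar_eigen kerb_row_s1s2s3; apply: NstableB; apply: Nstable_G;
  by do ![apply: inG_Rs1 | apply: inG_Rs2 | apply: inG_Rs3 | apply: inG_mulmx].
Qed.

Lemma Nscalar_alpha_l : Nscalar (alpha * l).
Proof.
have -> : alpha * l =
    (-4 + alpha + beta + l * m + alpha * l) + 4%:R - alpha - beta - l * m by ring.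
apply/NscalarD/NscalarN/Nscalar_gamma/NscalarD/NscalarN/Nscalar_beta.
exact/NscalarD/NscalarN/Nscalar_alpha/NscalarD/Nscalar_nat/Nscalar_theta.
Qed.

Lemma Nscalar_beta_m : Nscalar (beta * m).
Proof.
rewrite beta_m_Delta.
apply/NscalarD/NscalarN/Nscalar_alpha_l.
apply/NscalarD/NscalarN/NscalarM/Nscalar_gamma/Nscalar_nat.
apply/NscalarD/NscalarN/NscalarM/Nscalar_beta/Nscalar_nat.
exact/NscalarD/NscalarN/NscalarM/Nscalar_alpha/Nscalar_nat/Nscalar_nat.
Qed.

Lemma Nscalar_O' x : inO' alpha beta (l * m) l m x -> Nscalar x.
Proof.
elim=> [||||||y z _ sy _ sz|y _ sy|y z _ sy _ sz].
- exact: Nscalar1.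
- exact: Nscalar_alpha.
- exact: Nscalar_beta.
- exact: Nscalar_gamma.
- exact: Nscalar_alpha_l.
- exact: Nscalar_beta_m.
- exact: NscalarD.
- exact: NscalarN.
- exact: NscalarM.
Qed.

Lemma N2_scale x z : Nscalar x -> N2 alpha beta (l * m) l m z ->
  N2 alpha beta (l * m) l m (x * z.1, x * z.2).
Proof.
move=> sx /N2_inNrow [t Nt ->].
by have := inNrow_N2 (sx t Nt); rewrite !mxE.
Qed.

End TransvectionSubgroup.

Lemma prim_root_trace_neq4 (K : fieldType) r (w : K) :
  (1 < r)%N -> r.-primitive_root w -> 4 - (2 + w + w^-1) != 0.
Proof.
move=> r1 wr; have w0 : w != 0 by rewrite (prim_root_eq0 wr); case: r r1 wr.
have w1 : w - 1 != 0.
  rewrite subr_eq0; apply: contraTneq r1 => w1.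
  by have := prim_order_dvd wr 1; rewrite expr1 w1 eqxx dvdn1 => /eqP ->.
have -> : 4 - (2 + w + w^-1) = - ((w - 1) ^+ 2 / w) by field.
by rewrite oppr_eq0 mulf_neq0 ?invr_neq0 ?expf_neq0.
Qed.

Theorem theorem1 (K : numClosedFieldType) (p q r : nat)
  (hp : (3 <= p)%N) (hq : (3 <= q)%N) (hr : (3 <= r)%N)
  (w1 w2 w3 : K)
  (hw1 : p.-primitive_root w1) (hw2 : q.-primitive_root w2)
  (hw3 : r.-primitive_root w3)
  (alpha beta gamma l m : K)
  (halpha : alpha = 2 + w1 + w1^-1) (hbeta : beta = 2 + w2 + w2^-1)
  (hgamma : gamma = 2 + w3 + w3^-1)
  (hlm : l * m = gamma)
  (hDelta : Delta alpha beta gamma l m = 0) :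
  (forall (z : K * K) (x : K),
      N2 alpha beta gamma l m z -> inO' alpha beta gamma l m x ->
      N2 alpha beta gamma l m (x * z.1, x * z.2)) /\
  (forall z : K * K,
      N2 alpha beta gamma l m z ->
      N2 alpha beta gamma l m ((-4 + alpha + beta + gamma + alpha * l) * z.1,
                               (-4 + alpha + beta + gamma + alpha * l) * z.2)).
Proof.
have b1 : 4 - gamma != 0 by rewrite hgamma; exact: prim_root_trace_neq4 (ltnW hr) hw3.
clear hgamma; subst gamma.
split=> [z x Nz O'x | z]; apply: (N2_scale hDelta b1) => //.
- exact: Nscalar_O' O'x.
- exact: Nscalar_theta.
Qed.
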